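(* Let $P_{II*}=P_{II}$. For a filter $\Xi\in P_{III*}$, $\mathcal C_{\Xi\text{-unc}}\neq\emptyset$ if and only if there exists a partition $\xi\in P_I$ such that $\Xi=\uparrow\{\downarrow\{\xi\}\}$, i.e. $\Xi=\{\boldsymbol\xi\in P_{II}:\xi\in\boldsymbol\xi\}$, where $\downarrow\{\xi\}=\{\upsilon\in P_I:\upsilon\preceq\xi\}$ and $\uparrow\{\boldsymbol\zeta\}=\{\boldsymbol\upsilon\in P_{II}:\boldsymbol\zeta\subseteq\boldsymbol\upsilon\}$.
   Context: Let $n\ge1$, $L=\{1,\dots,n\}$, and for $i\in L$ let $\mathcal H_i$ be a Hilbert space with $1<\dim\mathcal H_i<\infty$; $\mathcal H_X=\bigotimes_{i\in X}\mathcal H_i$ and $\mathcal D_X$ is the set of density operators on $\mathcal H_X$. $P_I$ is the set of partitions of $L$ ordered by refinement ($\upsilon\preceq\xi$ iff every part of $\upsilon$ lies in a part of $\xi$). For $\xi\in P_I$, $\mathcal D_{\xi\text{-unc}}=\{\varrho\in\mathcal D_L:\varrho=\bigotimes_{X\in\xi}\varrho_X,\ \varrho_X\in\mathcal D_X\}$, and for $S\subseteq P_I$, $\mathcal D_{S\text{-unc}}=\bigcup_{\xi\in S}\mathcal D_{\xi\text{-unc}}$. $P_{II}$ is the set of nonempty down-sets of $P_I$, ordered by inclusion; $P_{III*}$ is the set of nonempty up-sets of $P_{II*}$. For $\Xi\in P_{III*}$: $\overline\Xi=P_{II*}\setminus\Xi$ and $\mathcal C_{\Xi\text{-unc}}=\bigcap_{\boldsymbol\xi'\in\overline\Xi}(\mathcal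 D_L\setminus\mathcal D_{\boldsymbol\xi'\text{-unc}})\cap\bigcap_{\boldsymbol\xi\in\Xi}\mathcal D_{\boldsymbol\xi\text{-unc}}$. *)

From HB Require Import structures.
From mathcomp Require Import all_boot all_order all_algebra.
Set Implicit Arguments. Unset Strict Implicit. Unset Printing Implicit Defensive.
Import Order.TTheory GRing.Theory Num.Theory.
Local Open Scope ring_scope.

(* Subsystems: L = 'I_n (sites 0..n-1), site i has Hilbert space C^(d i).
   The computational basis of H_X is indexed by the configurations on X. *)
Definition conf (n : nat) (d : 'I_n -> nat) (X : {set 'I_n}) : finType :=
  {dffun forall i : {i : 'I_n | i \in X}, 'I_(d (val i))}.

Definition confL (n : nat) (d : 'I_n -> nat) : finType :=
  {dffun forall i : 'I_n, 'I_(d i)}.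

Definition restr (n : nat) (d : 'I_n -> nat) (X : {set 'I_n}) (a : confL d)
  : conf d X := [ffun i : {i : 'I_n | i \in X} => a (val i)].

Definition is_density (C : numClosedFieldType) (T : finType) (rho : T -> T -> C)
  : Prop :=
  (forall v : T -> C, 0 <= \sum_(a : T) \sum_(b : T) (v a)^* * rho a b * v b)
  /\ \sum_(a : T) rho a a = 1.

Definition PI (n : nat) : {set {set {set 'I_n}}} :=
  [set xi | partition xi [set: 'I_n]].

Definition refines (n : nat) (u xi : {set {set 'I_n}}) : bool :=
  [forall X in u, [exists Y in xi, X \subset Y]].

Definition PII (n : nat) : {set {set {set {set 'I_n}}}} :=
  [set S | [&& S != set0, S \subset PI n &
     [forall xi in S, forall u in PI n, refines u xi ==> (u \in S)]]].

Definition PIII (n : nat) : {set {set {set {set {set 'I_n}}}}} :=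
  [set Xi | [&& Xi != set0, Xi \subset PII n &
     [forall S in Xi, forall T in PII n, (S \subset T) ==> (T \in Xi)]]].

Definition unc (C : numClosedFieldType) (n : nat) (d : 'I_n -> nat)
  (xi : {set {set 'I_n}}) (rho : confL d -> confL d -> C) : Prop :=
  is_density rho /\
  exists rhoX : forall X : {set 'I_n}, conf d X -> conf d X -> C,
    (forall X, X \in xi -> is_density (rhoX X)) /\
    forall a b : confL d, rho a b = \prod_(X in xi) rhoX X (restr X a) (restr X b).

Definition uncS (C : numClosedFieldType) (n : nat) (d : 'I_n -> nat)
  (S : {set {set {set 'I_n}}}) (rho : confL d -> confL d -> C) : Prop :=
  exists2 xi, xi \in S & unc xi rho.

Definition C_unc (C : numClosedFieldType) (n : nat) (d : 'I_n -> nat)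
  (Xi : {set {set {set {set 'I_n}}}}) (rho : confL d -> confL d -> C) : Prop :=
  is_density rho /\
  (forall S', S' \in PII n :\: Xi -> ~ uncS S' rho) /\
  (forall S, S \in Xi -> uncS S rho).

Definition down (n : nat) (xi : {set {set 'I_n}}) : {set {set {set 'I_n}}} :=
  [set u in PI n | refines u xi].
Definition up (n : nat) (Z : {set {set {set 'I_n}}}) : {set {set {set {set 'I_n}}}} :=
  [set S in PII n | Z \subset S].

From HB Require Import structures.
From mathcomp Require Import all_boot all_order all_algebra.
From mathcomp Require Import boolp.
Import Order.TTheory GRing.Theory Num.Theory.
Local Open Scope ring_scope.
Set Implicit Arguments. Unset Strict Implicit.

(* If a state rho is a product over the blocks of a partition P and also over
   those of a partition Q, then each factor of P is the marginal of rho on its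
   block X, and the product structure along Q splits this marginal as the
   product of the marginals on X :&: Y and X :\: Y, for every block Y of Q.
   So splitting a block of P along Q keeps rho uncorrelated: a partition with
   the most blocks among those for which rho is uncorrelated refines all the
   others. Hence rho is S-uncorrelated exactly when S contains this finest
   partition xi, and rho lies in C_Xi-unc only for Xi = up (down xi).
   Conversely, the state that is (|0..0><0..0| + |1..1><1..1|)/2 on each block
   of xi has xi as its finest partition. *)

Lemma trivIset_mem_eq (T : finType) (P : {set {set T}}) A B x :
  trivIset P -> A \in P -> B \in P -> x \in A -> x \in B -> A = B.
Proof. by move=> tP PA PB xA xB; rewrite -(def_pblock tP PA xA) (def_pblock tP PB xB). Qed.

Lemma diag_psd (C : numClosedFieldType) (T : finType) (r : T -> T -> C) :
  (forall x y, x != y -> r x y = 0) -> (forall x, 0 <= r x x) ->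
  forall v : T -> C, 0 <= \sum_x \sum_y (v x)^* * r x y * v y.
Proof.
move=> r_diag r_ge0 v; apply: sumr_ge0 => x _; rewrite (bigD1 x) //= big1 ?addr0.
  by rewrite mulrAC mulrC; apply: mulr_ge0 => //; rewrite mulrC mul_conjC_ge0.
by move=> y yx; rewrite r_diag ?mulr0 ?mul0r // eq_sym.
Qed.

Section Configurations.
Variables (n : nat) (d : 'I_n -> nat).
Local Notation T := (confL d).
Implicit Types (D W X Y Z : {set 'I_n}) (a b c : T).

Definition patch W a c : T := [ffun i => if i \in W then a i else c i].

Lemma patchE W a c i : patch W a c i = if i \in W then a i else c i.
Proof. by rewrite ffunE. Qed.

Definition agree_off D c a := [forall i, (i \in D) || (c i == a i)].

Lemma agree_offP D c a : reflect (forall i, i \notin D -> c i = a i) (agree_off D c a).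
Proof.
apply: (iffP forallP) => h i; first by move=> /negbTE iD; move: (h i); rewrite iD => /eqP.
by case iD: (i \in D) => //=; apply/eqP/h; rewrite iD.
Qed.

(* [al k] has type ['I_(d (val k))], not ['I_(d i)]: hence the detour through its value. *)
Definition extend X (al : conf d X) c : T :=
  [ffun i => if insub i is Some k then insubd (c i) (nat_of_ord (al k)) else c i].

Lemma extend_in X (al : conf d X) c i (iX : i \in X) : extend al c i = al (exist _ i iX).
Proof.
apply: val_inj; rewrite ffunE insubT /= val_insubd /=.
by case: (al _) => m lt_m /=; rewrite lt_m.
Qed.

Lemma extend_out X (al : conf d X) c i : i \notin X -> extend al c i = c i.
Proof. by move=> iX; rewrite ffunE insubF //; apply/negbTE. Qed.

Lemma restr_extend X (al : conf d X) c : restr X (extend al c) = al.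
Proof. by apply/ffunP => -[i iX]; rewrite ffunE /= (extend_in _ _ iX). Qed.

Lemma extend_restr X a c : agree_off X a c -> extend (restr X a) c = a.
Proof.
move/agree_offP=> ac; apply/ffunP => i; case iX: (i \in X).
  by rewrite (extend_in _ _ iX) ffunE.
by rewrite extend_out ?iX // ac ?iX.
Qed.

Lemma agree_off_extend X (al : conf d X) c : agree_off X (extend al c) c.
Proof. by apply/agree_offP => i iX; rewrite extend_out. Qed.

Lemma eq_restr X a a' : (forall i, i \in X -> a i = a' i) -> restr X a = restr X a'.
Proof. by move=> aa'; apply/ffunP => -[i iX]; rewrite !ffunE /= aa'. Qed.

End Configurations.

Section Partitions.
Variable n : nat.
Implicit Types (P Q : {set {set 'I_n}}) (X Y W : {set 'I_n}).

Lemma refines_refl P : refines P P.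
Proof. by apply/forallP => X; apply/implyP => PX; apply/existsP; exists X; rewrite PX subxx. Qed.

Lemma refines_trans P Q R : refines P Q -> refines Q R -> refines P R.
Proof.
move=> /forallP PQ /forallP QR; apply/forallP => X; apply/implyP => PX.
have /existsP [Y /andP [QY XY]] := implyP (PQ X) PX.
have /existsP [Z /andP [RZ YZ]] := implyP (QR Y) QY.
by apply/existsP; exists Z; rewrite RZ (subset_trans XY YZ).
Qed.

Lemma not_refines P Q : partition P setT -> partition Q setT -> ~~ refines P Q ->
  exists X Y, [/\ X \in P, Y \in Q, X :&: Y != set0 & X :\: Y != set0].
Proof.
case/and3P => _ _ P0 /and3P [/eqP Qcov _ _] /forallPn [X].
rewrite negb_imply => /andP [PX /existsPn XnQ].
have /set0Pn [i iX] : X != set0 by apply: contraNneq P0 => <-.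
have /bigcupP [Y QY iY] : i \in cover Q by rewrite Qcov inE.
have /subsetPn [j jX jY] : ~~ (X \subset Y) by move: (XnQ Y); rewrite QY.
exists X, Y; split => //; apply/set0Pn; first by exists i; rewrite inE iX iY.
by exists j; rewrite inE jX jY.
Qed.

Definition split_block P X Y := (X :&: Y) |: ((X :\: Y) |: (P :\ X)).

Lemma notin_setD1_sub P X W : trivIset P -> X \in P -> W != set0 -> W \subset X ->
  W \notin P :\ X.
Proof.
move=> tP PX /set0Pn [i iW] /subsetP WX; apply/setD1P => -[WnX PW].
by move: WnX; rewrite (trivIset_mem_eq tP PW PX iW (WX _ iW)) eqxx.
Qed.

Section SplitBlock.
Variables (P : {set {set 'I_n}}) (X Y : {set 'I_n}).
Hypotheses (P_part : partition P setT) (PX : X \in P)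
  (XY0 : X :&: Y != set0) (XnY0 : X :\: Y != set0).

Let tP : trivIset P. Proof. by case/and3P: P_part. Qed.

Lemma setI_notin_split : X :&: Y \notin (X :\: Y) |: (P :\ X).
Proof.
rewrite in_setU1 negb_or notin_setD1_sub ?subsetIl // andbT.
case/set0Pn: XY0 => i iXY; apply/eqP => XYeq; move: (iXY); rewrite XYeq !inE.
by move: iXY; rewrite !inE => /andP [_ ->].
Qed.

Lemma setD_notin_split : X :\: Y \notin P :\ X.
Proof. exact: notin_setD1_sub (subsetDl X Y). Qed.

Lemma card_split_block : #|split_block P X Y| = #|P|.+1.
Proof.
by rewrite /split_block cardsU1 setI_notin_split cardsU1 setD_notin_split [#|P|](cardsD1 X) PX.
Qed.

Lemma split_block_partition : partition (split_block P X Y) setT.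
Proof.
case/and3P: P_part => /eqP Pcov _ P0.
have blockE A i : A \in split_block P X Y -> i \in A ->
    A = if i \in X then (if i \in Y then X :&: Y else X :\: Y) else pblock P i.
  rewrite !inE => /or3P [/eqP->|/eqP->|/andP[AnX PA]] iA.
  - by move: iA; rewrite inE => /andP[-> ->].
  - by move: iA; rewrite inE => /andP[/negbTE -> ->].
  case: ifP => iX; first by move: AnX; rewrite (trivIset_mem_eq tP PA PX iA iX) eqxx.
  by rewrite (def_pblock tP PA iA).
apply/and3P; split.
- apply/eqP/setP => i; rewrite inE; apply/bigcupP.
  have /bigcupP [B PB iB] : i \in cover P by rewrite Pcov inE.
  have [BX|BnX] := eqVneq B X; last by exists B; rewrite // !inE BnX PB !orbT.
  rewrite BX in iB; case iY: (i \in Y); [exists (X :&: Y) | exists (X :\: Y)];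
    by rewrite !inE ?eqxx ?iB ?iY ?orbT.
- apply/trivIsetP => A B SA SB AnB; rewrite -setI_eq0; apply/set0Pn => -[i].
  by rewrite inE => /andP [iA iB]; move: AnB; rewrite (blockE A i) // (blockE B i) // eqxx.
- rewrite !inE negb_or eq_sym XY0 negb_or eq_sym XnY0 /=.
  by apply: contra P0 => /andP[].
Qed.

End SplitBlock.

Lemma PII_sub_PI (S : {set {set {set 'I_n}}}) : S \in PII n -> S \subset PI n.
Proof. by rewrite inE => /and3P []. Qed.

Lemma down_sub (S : {set {set {set 'I_n}}}) P Q : S \in PII n -> Q \in S ->
  refines P Q -> down P \subset S.
Proof.
rewrite inE => /and3P [_ _ /forallP S_down] SQ PQ; apply/subsetP => R.
rewrite inE => /andP [PIR RP].
by have /forallP/(_ R) := implyP (S_down Q) SQ; rewrite PIR (refines_trans RP PQ).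
Qed.

Lemma mem_up_down (S : {set {set {set 'I_n}}}) P : P \in PI n ->
  (S \in up (down P)) = (S \in PII n) && (P \in S).
Proof.
move=> PIP; rewrite inE; apply: andb_id2l => PIIS; apply/idP/idP => [/subsetP|SP].
  by apply; rewrite inE PIP refines_refl.
exact: down_sub PIIS SP (refines_refl P).
Qed.

End Partitions.

Section PartialSums.
Variables (C : numClosedFieldType) (n : nat) (d : 'I_n -> nat).
Local Notation T := (confL d).
Implicit Types (D E W X Y Z : {set 'I_n}) (a b c e : T) (f g : T -> C).

Definition psum D a f : C := \sum_(c | agree_off D c a) f c.

Lemma sum_conf_psum X c (f : conf d X -> C) :
  \sum_(al : conf d X) f al = psum X c (fun a => f (restr X a)).
Proof.
rewrite /psum (reindex_onto (fun al : conf d X => extend al c) (restr X)).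
  by apply: eq_big => [al|al _]; rewrite ?agree_off_extend restr_extend ?eqxx.
by move=> a; apply: extend_restr.
Qed.

Lemma psum_set0 a f : psum set0 a f = f a.
Proof.
rewrite /psum (big_pred1 a) // => c; apply/agree_offP/eqP => [ca|-> //].
by apply/ffunP => i; apply: ca; rewrite inE.
Qed.

Lemma psum_setT a f : psum setT a f = \sum_c f c.
Proof. by apply: eq_bigl => c; apply/agree_offP => i; rewrite inE. Qed.

Lemma eq_psum D a f g : (forall c, agree_off D c a -> f c = g c) -> psum D a f = psum D a g.
Proof. exact: eq_bigr. Qed.

Lemma psum_agree D a a' f : agree_off D a a' -> psum D a f = psum D a' f.
Proof.
by move/agree_offP=> aa'; apply: eq_bigl => c; apply/agree_offP/agree_offP => ca i iD;
  rewrite ca // aa'.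
Qed.

Lemma psum_mulr D a f x : psum D a (fun c => x * f c) = x * psum D a f.
Proof. by rewrite /psum mulr_sumr. Qed.

Lemma psum_mull D a f x : psum D a (fun c => f c * x) = psum D a f * x.
Proof. by rewrite /psum mulr_suml. Qed.

Lemma exchange_psum D a D' a' (F : T -> T -> C) :
  psum D a (fun x => psum D' a' (F x)) = psum D' a' (fun y => psum D a (F^~ y)).
Proof. exact: exchange_big. Qed.

Lemma psumU D1 D2 a f : [disjoint D1 & D2] ->
  psum (D1 :|: D2) a f = psum D1 a (fun c1 => psum D2 c1 f).
Proof.
move=> D12; rewrite /psum (partition_big (patch D1 ^~ a) (agree_off D1 ^~ a)); last first.
  by move=> c /agree_offP ca; apply/agree_offP => i iD1; rewrite patchE (negbTE iD1).
apply: eq_bigr => c1 /agree_offP c1a; apply: eq_bigl => c; apply/andP/agree_offP.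
  case=> /agree_offP ca /eqP <- i iD2; rewrite patchE; case: ifP => // iD1.
  by rewrite ca // inE iD1.
move=> cc1; split.
  apply/agree_offP => i; rewrite inE negb_or => /andP[iD1 iD2].
  by rewrite cc1 // c1a.
apply/eqP/ffunP => i; rewrite patchE; case: ifP => iD1.
  by apply: cc1; rewrite (disjointFr D12 iD1).
by rewrite c1a ?iD1.
Qed.

Lemma psum_patch E a c f : psum E a (fun b => f (patch E b c)) = psum E c f.
Proof.
have patchK y : agree_off E y c -> patch E (patch E y a) c = y.
  move=> /agree_offP yc; apply/ffunP => i; rewrite !patchE.
  by case iE: (i \in E); rewrite // yc ?iE.
symmetry; rewrite /psum (reindex_onto (patch E ^~ c) (patch E ^~ a)); last first.
  by move=> y; apply: patchK.
apply: eq_bigl => b; apply/andP/agree_offP.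
  by case=> _ /eqP <- i iE; rewrite patchE (negbTE iE).
move=> ba; split; first by apply/agree_offP => i iE; rewrite patchE (negbTE iE).
apply/eqP/ffunP => i; rewrite !patchE; case iE: (i \in E) => //.
by rewrite ba ?iE.
Qed.

Definition depends_on W f := forall a a', (forall i, i \in W -> a i = a' i) -> f a = f a'.

Lemma psum_depends_on W E a a' f : depends_on W f ->
  (forall i, i \in W -> i \notin E -> a i = a' i) -> psum E a f = psum E a' f.
Proof.
move=> Wf aa'; rewrite -(psum_patch E a a' f); apply: eq_psum => b /agree_offP ba.
apply: Wf => i iW; rewrite patchE; case: ifP => // iE.
by rewrite ba ?iE // aa' ?iE.
Qed.

Lemma psum_prod (P : {set {set 'I_n}}) (F : {set 'I_n} -> T -> C) :
  trivIset P -> (forall X, X \in P -> depends_on X (F X)) ->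
  (forall X e, X \in P -> psum X e (F X) = 1) ->
  forall e, psum (cover P) e (fun c => \prod_(X in P) F X c) = 1.
Proof.
move: {2}#|P| (leqnn #|P|) => m; elim: m P => [|m IH] P leP tP FP F1 e.
  by move: leP; rewrite leqn0 cards_eq0 => /eqP ->; rewrite /cover !big_set0 psum_set0 big_set0.
have [->|[X PX]] := set_0Vmem P; first by rewrite /cover !big_set0 psum_set0 big_set0.
have tPX : trivIset (P :\ X) by apply: trivIsetS tP; apply: subsetDl.
have disXP : [disjoint X & cover (P :\ X)].
  by rewrite coverD1 // disjoints_subset; apply/subsetP => i; rewrite !inE => ->.
rewrite {1}/cover (big_setD1 X PX) /= psumU //.
transitivity (psum X e (F X)); last exact: F1.
apply: eq_psum => c1 _.
transitivity (F X c1 * psum (cover (P :\ X)) c1 (fun c => \prod_(Y in P :\ X) F Y c)).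
  rewrite -psum_mulr; apply: eq_psum => c /agree_offP cc1.
  rewrite (big_setD1 X PX); congr (_ * _); apply: (FP X PX) => i iX.
  by rewrite cc1 // (disjointFr disXP iX).
rewrite IH ?mulr1 //.
- by rewrite -ltnS (leq_trans _ leP) // [#|P|](cardsD1 X) PX.
- by move=> Y /setD1P [_ PY]; apply: FP.
- by move=> Y e' /setD1P [_ PY]; apply: F1.
Qed.

End PartialSums.

Section Marginals.
Variables (C : numClosedFieldType) (n : nat) (d : 'I_n -> nat).
Local Notation T := (confL d).
Implicit Types (X Y Z W : {set 'I_n}) (a b c e : T) (rho F G g : T -> T -> C).

Definition acts_on W F := forall a a' b b',
  (forall i, i \in W -> a i = a' i) -> (forall i, i \in W -> b i = b' i) -> F a b = F a' b'.

(* The partial trace of [rho] over the complement of [Z], read on full configurations. *)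
Definition marginal rho Z a b := psum (~: Z) a (fun c => rho c (patch Z b c)).

Lemma marginal_acts_on rho Z : acts_on Z (marginal rho Z).
Proof.
move=> a a' b b' aa' bb'; rewrite /marginal (@psum_agree _ _ _ _ a a'); last first.
  by apply/agree_offP => i; rewrite inE negbK; apply: aa'.
apply: eq_psum => c _; congr (rho c _); apply/ffunP => i; rewrite !patchE.
by case: ifP => // /bb'.
Qed.

Section ProductOperator.
Variables (rho g G : T -> T -> C) (Y : {set 'I_n}).
Hypotheses (rho_gG : forall a b, rho a b = g a b * G a b)
           (g_Y : acts_on Y g) (G_Y : acts_on (~: Y) G).

Lemma marginal_mul X a b :
  marginal rho X a b = psum (Y :\: X) a (fun c => g c (patch X b c)) *
                       psum (~: X :\: Y) a (fun c => G c (patch X b c)).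
Proof.
have splitX : ~: X = (Y :\: X) :|: (~: X :\: Y).
  by apply/setP => i; rewrite !inE; case: (i \in X); case: (i \in Y).
rewrite /marginal {1}splitX psumU; last first.
  by rewrite disjoints_subset; apply/subsetP => i; rewrite !inE => /andP[_ ->].
rewrite -psum_mull; apply: eq_psum => c1 /agree_offP c1a.
transitivity (psum (~: X :\: Y) c1 (fun c => g c1 (patch X b c1) * G c (patch X b c))).
  apply: eq_psum => c /agree_offP cc1; rewrite rho_gG; congr (_ * _).
  apply: g_Y => i iY; first by rewrite cc1 // !inE iY.
  by rewrite !patchE; case: (i \in X) => //; rewrite cc1 // !inE iY.
rewrite psum_mulr; congr (_ * _); apply: (@psum_depends_on _ _ _ (~: Y)).
  by move=> x x' xx'; apply: G_Y => // i iY; rewrite !patchE; case: (i \in X) => //; apply: xx'.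
by move=> i; rewrite inE => iY _; apply: c1a; rewrite !inE (negbTE iY) andbF.
Qed.

Hypothesis G_trace : forall e, psum (~: Y) e (fun c => G c c) = 1.

Lemma psum_patch_trace X a b : X \subset Y ->
  psum (~: X :\: Y) a (fun c => G c (patch X b c)) = 1.
Proof.
move=> /subsetP XY; have -> : ~: X :\: Y = ~: Y.
  by apply/setP => i; rewrite !inE; case iY: (i \in Y); rewrite ?andbF // (contraFN (XY i) iY).
rewrite -(G_trace a); apply: eq_psum => c _; apply: G_Y => // i iY.
by rewrite patchE; case: ifP => // /XY; rewrite inE in iY; rewrite (negbTE iY).
Qed.

Lemma marginal_factor a b : marginal rho Y a b = g a b.
Proof.
rewrite marginal_mul psum_patch_trace ?subxx // mulr1 setDv psum_set0.
by apply: g_Y => // i iY; rewrite patchE iY.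
Qed.

Hypothesis g_trace : forall e, psum Y e (fun c => g c c) = 1.

Lemma marginal_split X a b :
  marginal rho X a b = marginal rho (X :&: Y) a b * marginal rho (X :\: Y) a b.
Proof.
rewrite !marginal_mul (psum_patch_trace _ _ (subsetIr X Y)) mulr1.
have -> : Y :\: (X :\: Y) = Y by apply/setP => i; rewrite !inE; case: (i \in X); case: (i \in Y).
have -> : Y :\: (X :&: Y) = Y :\: X.
  by apply/setP => i; rewrite !inE; case: (i \in X); case: (i \in Y).
have -> : ~: (X :\: Y) :\: Y = ~: X :\: Y.
  by apply/setP => i; rewrite !inE; case: (i \in X); case: (i \in Y).
have -> : psum Y a (fun c => g c (patch (X :\: Y) b c)) = 1.
  by rewrite -(g_trace a); apply: eq_psum => c _; apply: g_Y => // i iY; rewrite patchE !inE iY.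
have -> : psum (Y :\: X) a (fun c => g c (patch (X :&: Y) b c)) =
          psum (Y :\: X) a (fun c => g c (patch X b c)).
  by apply: eq_psum => c _; apply: g_Y => // i iY; rewrite !patchE !inE iY andbT.
have -> : psum (~: X :\: Y) a (fun c => G c (patch (X :\: Y) b c)) =
             psum (~: X :\: Y) a (fun c => G c (patch X b c)).
by apply: eq_psum => c _; apply: G_Y => // i; rewrite inE => iY; rewrite !patchE !inE (negbTE iY).
by rewrite mul1r.
Qed.

End ProductOperator.

Definition marginal_conf rho Z e0 : conf d Z -> conf d Z -> C :=
  fun al be => marginal rho Z (extend al e0) (extend be e0).
Arguments marginal_conf rho Z e0 _ _ : clear implicits.

Lemma marginal_conf_restr rho Z e0 a b :
  marginal_conf rho Z e0 (restr Z a) (restr Z b) = marginal rho Z a b.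
Proof. by apply: marginal_acts_on => i iZ; rewrite (extend_in _ _ iZ) ffunE. Qed.

Lemma psd_psum_block rho Z e (w : conf d Z -> C) : is_density rho ->
  0 <= psum Z e (fun x => psum Z e (fun y => (w (restr Z x))^* * rho x y * w (restr Z y))).
Proof.
case=> rho_psd _; pose u x := if agree_off Z x e then w (restr Z x) else 0.
suff -> : psum Z e (fun x => psum Z e (fun y => (w (restr Z x))^* * rho x y * w (restr Z y)))
  = \sum_x \sum_y (u x)^* * rho x y * u y by apply: rho_psd.
rewrite /psum big_mkcond; apply: eq_bigr => x _; rewrite /u; case: ifP => _.
  by rewrite big_mkcond; apply: eq_bigr => y _; case: ifP; rewrite ?mulr0.
by rewrite big1 // => y _; rewrite conjC0 !mul0r.
Qed.

Lemma marginal_conf_trace rho Z e0 :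
  \sum_(al : conf d Z) marginal_conf rho Z e0 al al = \sum_c rho c c.
Proof.
have disZ : [disjoint Z & ~: Z] by rewrite disjoints_subset setCK.
rewrite (sum_conf_psum e0) -(psum_setT e0) -(setUCr Z) psumU //.
apply: eq_psum => a _; rewrite marginal_conf_restr /marginal.
apply: eq_psum => c /agree_offP ca; congr (rho c _); apply/ffunP => i.
by rewrite patchE; case: ifP => // iZ; rewrite ca // inE iZ.
Qed.

(* The quadratic form of the marginal is the sum, over the configurations [e]
   off [Z], of the quadratic forms of [rho] compressed to the fibre of [e]. *)
Lemma marginal_conf_psd rho Z e0 (v : conf d Z -> C) : is_density rho ->
  0 <= \sum_al \sum_be (v al)^* * marginal_conf rho Z e0 al be * v be.
Proof.
move=> rho_dens; have disZ : [disjoint Z & ~: Z] by rewrite disjoints_subset setCK.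
pose form c y := (v (restr Z c))^* * rho c y * v (restr Z y).
have -> : \sum_al \sum_be (v al)^* * marginal_conf rho Z e0 al be * v be =
          psum Z e0 (fun a => psum (~: Z) a (fun c => psum Z e0 (fun b => form c (patch Z b c)))).
  rewrite (sum_conf_psum e0); apply: eq_psum => a _; rewrite (sum_conf_psum e0).
  transitivity (psum Z e0 (fun b => (v (restr Z a))^* * marginal rho Z a b * v (restr Z b))).
    by apply: eq_psum => b _; rewrite marginal_conf_restr.
  rewrite -exchange_psum; apply: eq_psum => b _.
  rewrite /marginal -psum_mulr -psum_mull; apply: eq_psum => c /agree_offP ca; rewrite /form.
  have -> : restr Z c = restr Z a by apply: eq_restr => i iZ; rewrite ca // inE iZ.
  by rewrite (@eq_restr _ _ Z (patch Z b c) b) // => i iZ; rewrite patchE iZ.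
rewrite -psumU // setUCr psum_setT.
rewrite (eq_bigr (fun c => psum Z c (form c))); last by move=> c _; rewrite -(psum_patch Z e0 c).
rewrite -(psum_setT e0) -(setUCr (~: Z)) setCK psumU; last by rewrite disjoint_sym.
apply: sumr_ge0 => e _; rewrite (eq_psum (g := fun x => psum Z e (form x))).
  exact: psd_psum_block.
by move=> c ce; apply: psum_agree.
Qed.

Lemma marginal_conf_density rho Z e0 : is_density rho -> is_density (marginal_conf rho Z e0).
Proof.
move=> rho_dens; split=> [v|]; first exact: marginal_conf_psd.
by rewrite marginal_conf_trace; case: rho_dens.
Qed.

End Marginals.
Arguments marginal_conf {C n d} rho Z e0 _ _.

Section Uncorrelated.
Variables (C : numClosedFieldType) (n : nat) (d : 'I_n -> nat).
Local Notation T := (confL d).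
Implicit Types (P Q : {set {set 'I_n}}) (X Y Z : {set 'I_n}) (a b e : T) (rho : T -> T -> C).

Section ProductState.
Variables (P : {set {set 'I_n}}) (rX : forall X, conf d X -> conf d X -> C) (rho : T -> T -> C).
Arguments rX : clear implicits.
Hypotheses (P_part : partition P setT) (rX_dens : forall X, X \in P -> is_density (rX X))
  (rho_prod : forall a b, rho a b = \prod_(X in P) rX X (restr X a) (restr X b)).

Let tP : trivIset P. Proof. by case/and3P: P_part. Qed.

Let block X a b := rX X (restr X a) (restr X b).
Let coblock X a b := \prod_(Y in P :\ X) block Y a b.

Let block_acts_on X : acts_on X (block X).
Proof. by move=> a a' b b' aa' bb'; rewrite /block (eq_restr aa') (eq_restr bb'). Qed.

Let block_trace X e : X \in P -> psum X e (fun c => block X c c) = 1.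
Proof. by move/rX_dens => [_ <-]; rewrite (sum_conf_psum e). Qed.

Let coblock_acts_on X : X \in P -> acts_on (~: X) (coblock X).
Proof.
move=> PX a a' b b' aa' bb'; apply: eq_bigr => Y /setD1P [YX PY].
have YnX i : i \in Y -> i \in ~: X.
  by move=> iY; rewrite inE; apply: contra YX => iX; rewrite (trivIset_mem_eq tP PY PX iY iX).
by apply: block_acts_on => i /YnX; [apply: aa' | apply: bb'].
Qed.

Let coblock_trace X e : X \in P -> psum (~: X) e (fun c => coblock X c c) = 1.
Proof.
move=> PX; have -> : ~: X = cover (P :\ X).
  by rewrite coverD1 // (cover_partition P_part) setTD.
apply: psum_prod => [||Y e' /setD1P [_ PY]]; last exact: block_trace.
  by apply: trivIsetS tP; apply: subsetDl.
by move=> Y _ c c' cc'; apply: block_acts_on.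
Qed.

Let rho_block X a b : X \in P -> rho a b = block X a b * coblock X a b.
Proof. by move=> PX; rewrite rho_prod (big_setD1 X PX). Qed.

Lemma prod_marginal X a b : X \in P -> marginal rho X a b = rX X (restr X a) (restr X b).
Proof.
move=> PX; apply: (marginal_factor (g := block X) (G := coblock X)).
- by move=> a' b'; apply: rho_block.
- exact: block_acts_on.
- exact: coblock_acts_on.
- by move=> e; apply: coblock_trace.
Qed.

Lemma prod_marginal_split X Y a b : Y \in P ->
  marginal rho X a b = marginal rho (X :&: Y) a b * marginal rho (X :\: Y) a b.
Proof.
move=> PY; apply: (marginal_split (g := block Y) (G := coblock Y)).
- by move=> a' b'; apply: rho_block.
- exact: block_acts_on.
- exact: coblock_acts_on.
- by move=> e; apply: coblock_trace.
- by move=> e; apply: block_trace.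
Qed.

End ProductState.

Lemma unc_prod_marginal P rho a b : partition P setT -> unc P rho ->
  rho a b = \prod_(X in P) marginal rho X a b.
Proof.
move=> P_part [_ [rX [rX_dens rho_prod]]]; rewrite rho_prod.
by apply: eq_bigr => X PX; rewrite (prod_marginal P_part rX_dens rho_prod).
Qed.

Lemma unc_marginal_split Q rho X Y a b : partition Q setT -> unc Q rho -> Y \in Q ->
  marginal rho X a b = marginal rho (X :&: Y) a b * marginal rho (X :\: Y) a b.
Proof.
by move=> Q_part [_ [rY [rY_dens rho_prod]]]; apply: (prod_marginal_split Q_part rY_dens).
Qed.

Lemma unc_diag_patch Q rho Y a b : partition Q setT -> unc Q rho -> Y \in Q ->
  rho a a != 0 -> rho b b != 0 -> rho (patch Y b a) (patch Y b a) != 0.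
Proof.
case/and3P => _ tQ _ [_ [rY [_ rho_prod]]] QY; rewrite !rho_prod => /prodf_neq0 a0 /prodf_neq0 b0.
apply/prodf_neq0 => Z QZ; have [->|ZnY] := eqVneq Z Y.
  by rewrite (@eq_restr _ _ Y _ b) ?b0 // => i iY; rewrite patchE iY.
rewrite (@eq_restr _ _ Z _ a) ?a0 // => i iZ; rewrite patchE; case: ifP => // iY.
by move: ZnY; rewrite (trivIset_mem_eq tQ QZ QY iZ iY) eqxx.
Qed.

End Uncorrelated.

Section FinestPartition.
Variables (C : numClosedFieldType) (n : nat) (d : 'I_n -> nat).
Local Notation T := (confL d).
Implicit Types (P Q R : {set {set 'I_n}}) (rho : T -> T -> C).

Lemma split_block_unc P Q X Y rho : partition P setT -> partition Q setT ->
  unc P rho -> unc Q rho -> X \in P -> Y \in Q -> X :&: Y != set0 -> X :\: Y != set0 ->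
  unc (split_block P X Y) rho.
Proof.
move=> P_part Q_part uncP uncQ PX QY XY0 XnY0; have rho_dens := uncP.1.
(* [marginal_conf] needs some full configuration; there is one since [rho] has trace 1. *)
have [e0 _] : exists e0 : T, true.
  case: (pickP (fun _ : T => true)) => [e0 _|T0]; first by exists e0.
  by case: rho_dens => _; rewrite big_pred0 // => /eqP; rewrite eq_sym oner_eq0.
split=> //; exists (fun Z => marginal_conf rho Z e0); split=> [Z _|a b].
  exact: marginal_conf_density.
rewrite (unc_prod_marginal _ _ P_part uncP) (big_setD1 X PX) /=.
rewrite (unc_marginal_split _ _ _ Q_part uncQ QY) /split_block.
rewrite big_setU1 ?setI_notin_split //= big_setU1 ?setD_notin_split //= !marginal_conf_restr.
by rewrite mulrA; congr (_ * _); apply: eq_bigr => Z _; rewrite marginal_conf_restr.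
Qed.

Definition finest_unc P rho :=
  [/\ P \in PI n, unc P rho & forall Q, Q \in PI n -> unc Q rho -> refines P Q].

Lemma exists_finest_unc P rho : P \in PI n -> unc P rho -> exists Q, finest_unc Q rho.
Proof.
move=> PIP uncP; pose U Q := (Q \in PI n) && `[< unc Q rho >].
have UP : U P by rewrite /U PIP; apply/asboolP.
have [Q /andP [PIQ /asboolP uncQ] Qmax] := arg_maxnP (fun Q => #|Q|) UP.
exists Q; split=> // R PIR uncR; apply: contraT.
have Q_part : partition Q setT by rewrite inE in PIQ.
have R_part : partition R setT by rewrite inE in PIR.
move=> /(not_refines Q_part R_part) [X [Y [QX RY XY0 XnY0]]].
suff /Qmax : U (split_block Q X Y) by rewrite card_split_block //= ltnn.
rewrite /U inE split_block_partition //; apply/asboolP.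
exact: (split_block_unc Q_part R_part uncQ uncR QX RY).
Qed.

End FinestPartition.

Section CorrelatedState.
Variables (C : numClosedFieldType) (n : nat) (d : 'I_n -> nat).
Hypothesis d_gt1 : forall i, (1 < d i)%N.
Local Notation T := (confL d).
Implicit Types (P Q : {set {set 'I_n}}) (X Y : {set 'I_n}) (a b : T).

Definition zeros : T := [ffun i => Ordinal (ltnW (d_gt1 i))].
Definition ones : T := [ffun i => Ordinal (d_gt1 i)].

(* The classical mixture (|0..0><0..0| + |1..1><1..1|) / 2 on the subsystem [X]:
   its two outcomes are perfectly correlated across every cut of [X]. *)
Definition corr_block X : conf d X -> conf d X -> C := fun al be =>
  if (al == be) && ((al == restr X zeros) || (al == restr X ones)) then 2^-1 else 0.
Arguments corr_block X _ _ : clear implicits.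

Definition corr_state P a b := \prod_(X in P) corr_block X (restr X a) (restr X b).

Lemma restr_zeros_ones X : X != set0 -> restr X zeros != restr X ones.
Proof.
case/set0Pn => i iX; apply/eqP => /ffunP /(_ (exist _ i iX)).
by rewrite !ffunE /= => /(congr1 val).
Qed.

Lemma corr_block_ge0 X al be : 0 <= corr_block X al be.
Proof. by rewrite /corr_block; case: ifP; rewrite ?invr_ge0 ?ler0n. Qed.

Lemma corr_block_density X : X != set0 -> is_density (corr_block X).
Proof.
move=> X0; split.
  apply: diag_psd => [al be alnbe|al]; last exact: corr_block_ge0.
  by rewrite /corr_block (negbTE alnbe).
transitivity (\sum_(al in [set restr X zeros; restr X ones]) (2^-1 : C)).
  by rewrite [RHS]big_mkcond; apply: eq_bigr => al _; rewrite /corr_block eqxx !inE.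
rewrite sumr_const cards2 restr_zeros_ones //= -(mulr_natl (2^-1 : C) 2) mulfV //.
by rewrite pnatr_eq0.
Qed.

Section OnPartition.
Variable P : {set {set 'I_n}}.
Hypothesis P_part : partition P setT.

Let P0 X : X \in P -> X != set0.
Proof. by case/and3P: P_part => _ _ P0 PX; apply: contraNneq P0 => <-. Qed.

Lemma corr_state_density : is_density (corr_state P).
Proof.
case/and3P: P_part => /eqP Pcov tP _; split.
  apply: diag_psd => [a b anb|a]; last by apply: prodr_ge0 => X _; apply: corr_block_ge0.
  apply/eqP; apply: contraNT anb => /prodf_neq0 ab0; apply/eqP/ffunP => i.
  have /bigcupP [X PX iX] : i \in cover P by rewrite Pcov inE.
  have /ffunP/(_ (exist _ i iX)) : restr X a = restr X b.
    apply/eqP; move: (ab0 X PX); rewrite /corr_block.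
    by case: (restr X a == restr X b); rewrite //= eqxx.
  by rewrite !ffunE.
rewrite -(psum_setT zeros) -Pcov.
apply: (psum_prod (F := fun X c => corr_block X (restr X c) (restr X c))) => //.
  by move=> X _ c c' cc'; rewrite (eq_restr cc').
move=> X e PX; rewrite -(sum_conf_psum e (fun al => corr_block X al al)).
by case: (corr_block_density (P0 PX)).
Qed.

Lemma corr_state_unc : unc P (corr_state P).
Proof.
split; first exact: corr_state_density.
by exists corr_block; split=> // X PX; apply: corr_block_density; apply: P0.
Qed.

Lemma corr_state_refines Q : partition Q setT -> unc Q (corr_state P) -> refines P Q.
Proof.
move=> Q_part uncQ; apply: contraT => /(not_refines P_part Q_part).
case=> X [Y [PX QY /set0Pn [i /setIP [iX iY]] /set0Pn [j /setDP [jX jnY]]]].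
have diag_neq0 a :
    (forall Z, Z \in P -> (restr Z a == restr Z zeros) || (restr Z a == restr Z ones)) ->
    corr_state P a a != 0.
  by move=> aP; apply/prodf_neq0 => Z PZ; rewrite /corr_block eqxx aP // invr_eq0 pnatr_eq0.
(* Both diagonal entries below are nonzero, so the product structure along [Q] makes
   the entry at [c] nonzero; but [c] is neither all zeros nor all ones on [X]. *)
pose a1 := patch X ones zeros; pose c := patch Y zeros a1.
have a1_neq0 : corr_state P a1 a1 != 0.
  apply: diag_neq0 => Z PZ; apply/orP; have [->|ZnX] := eqVneq Z X.
    by right; apply/eqP/eq_restr => k kX; rewrite patchE kX.
  left; apply/eqP/eq_restr => k kZ; rewrite patchE; case: ifP => // kX.
  by case/and3P: P_part => _ tP _; move: ZnX; rewrite (trivIset_mem_eq tP PZ PX kZ kX) eqxx.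
have zeros_neq0 : corr_state P zeros zeros != 0 by apply: diag_neq0 => Z _; rewrite eqxx.
have cX0 : restr X c != restr X zeros.
  by apply/eqP => /ffunP/(_ (exist _ j jX)); rewrite !ffunE /= (negbTE jnY) jX => /(congr1 val).
have cX1 : restr X c != restr X ones.
  by apply/eqP => /ffunP/(_ (exist _ i iX)); rewrite !ffunE /= iY => /(congr1 val).
have := unc_diag_patch Q_part uncQ QY a1_neq0 zeros_neq0.
by rewrite /corr_state (bigD1 X PX) /= {1}/corr_block eqxx (negbTE cX0) (negbTE cX1) mul0r eqxx.
Qed.

Lemma corr_state_finest : finest_unc P (corr_state P).
Proof.
split; [by rewrite inE | exact: corr_state_unc | move=> Q].
by rewrite inE => Q_part; apply: corr_state_refines.
Qed.

End OnPartition.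
End CorrelatedState.

Section Characterisation.
Variables (C : numClosedFieldType) (n : nat) (d : 'I_n -> nat).
Variables (P : {set {set 'I_n}}) (rho : confL d -> confL d -> C).
Hypothesis finP : finest_unc P rho.

Lemma uncS_finest (S : {set {set {set 'I_n}}}) : S \in PII n -> uncS S rho <-> P \in S.
Proof.
have [PIP uncP minP] := finP; move=> PIIS; split=> [[Q SQ uncQ]|PS]; last by exists P.
have /subsetP := down_sub PIIS SQ (minP Q (subsetP (PII_sub_PI PIIS) Q SQ) uncQ).
by apply; rewrite inE PIP refines_refl.
Qed.

Lemma C_unc_finest (Xi : {set {set {set {set 'I_n}}}}) :
  Xi \subset PII n -> C_unc Xi rho <-> Xi = up (down P).
Proof.
have [PIP [rho_dens _] _] := finP; move=> /subsetP XiPII.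
split=> [[_ [Xi_out Xi_in]]|->].
  apply/setP => S; rewrite mem_up_down //; apply/idP/andP => [SXi|[PIIS PS]].
    by have PIIS := XiPII S SXi; split=> //; apply/(uncS_finest PIIS)/Xi_in.
  by apply: contraT => SnXi; case: (Xi_out S); [rewrite inE SnXi | apply/uncS_finest].
split=> //; split=> S; rewrite ?in_setD mem_up_down //.
  by case/andP=> + PIIS; rewrite PIIS /= => PnS /(uncS_finest PIIS) PS; rewrite PS in PnS.
by case/andP=> PIIS PS; apply/uncS_finest.
Qed.

End Characterisation.

Theorem proposition3 (C : numClosedFieldType) (n : nat) (d : 'I_n -> nat)
  (hn : (1 <= n)%N) (hd : forall i : 'I_n, (1 < d i)%N)
  (Xi : {set {set {set {set 'I_n}}}}) (hXi : Xi \in PIII n) :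
  (exists rho : confL d -> confL d -> C, C_unc Xi rho) <->
  (exists2 xi, xi \in PI n & Xi = up (down xi)).
Proof.
move: (hXi); rewrite inE => /and3P [/set0Pn [S SXi] XiPII _].
split=> [[rho Crho]|[P PIP XiE]].
  have [Q SQ uncQ] := Crho.2.2 S SXi.
  have PIQ : Q \in PI n by apply: subsetP (PII_sub_PI (subsetP XiPII S SXi)) Q SQ.
  have [P finP] := exists_finest_unc PIQ uncQ.
  by exists P; [case: finP | apply/(C_unc_finest finP XiPII)].
have P_part : partition P setT by rewrite inE in PIP.
by exists (corr_state C hd P); apply/(C_unc_finest (corr_state_finest C hd P_part) XiPII).
Qed.
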